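(* Let $F:\mathbb{R}\to\mathbb{R}$ be a function (identified with its graph in $\mathbb{R}^2$). If $A\cap F\neq\emptyset$ for every closed set $A\subset\mathbb{R}^2$ such that $\pi(A)$ contains a nondegenerate interval, then $F$ is a connected subspace of $\mathbb{R}^2$.
   Context: $\pi:\mathbb{R}^2\to\mathbb{R}$ is the projection $(x,y)\mapsto x$. *)

From HB Require Import structures.
From mathcomp Require Import all_boot all_order all_algebra.
From mathcomp Require Import all_classical all_reals all_analysis.
Set Implicit Arguments. Unset Strict Implicit. Unset Printing Implicit Defensive.
Import Order.TTheory GRing.Theory Num.Theory numFieldNormedType.Exports.
Local Open Scope classical_set_scope.
Local Open Scope ring_scope.

Definition graph_of {R : realType} (F : R -> R) : set (R * R) :=
  [set p | p.2 = F p.1].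

Definition proj1 {R : realType} (p : R * R) : R := p.1.

From HB Require Import structures.
From mathcomp Require Import all_boot all_order all_algebra.
From mathcomp Require Import all_classical all_reals all_analysis.
Import Order.TTheory GRing.Theory Num.Theory numFieldNormedType.Exports.
Local Open Scope classical_set_scope.
Local Open Scope ring_scope.

(* If the graph G of F were disconnected, G would split into two separated
   pieces, which in the metric space R^2 have disjoint open neighbourhoods U
   and V; then K := ~` (U `|` V) is closed and misses G.  The projections of U
   and V are open and cover R (because G projects onto R), so they share an
   open interval I.  Over each x in I the vertical line {x} x R meets both U
   and V, hence, being connected, also K.  So the projection of K contains I,
   and the hypothesis puts a point of G in K. *)

Section separated_open_nbhs.
Context {R : realFieldType} {T : pseudoMetricNormedZmodType R}.

Definition half_balls (rho : T -> R) (S : set T) : set T :=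
  \bigcup_(p in S) ball p (rho p / 2).

Lemma open_half_balls rho S : open (half_balls rho S).
Proof. by apply: bigcup_open => p _; exact: ball_open. Qed.

Lemma half_balls_disjoint (rho : T -> R) (S S' : set T) :
  (forall p q, S p -> S' q -> ~ ball p (rho p) q /\ ~ ball q (rho q) p) ->
  half_balls rho S `&` half_balls rho S' = set0.
Proof.
move=> far; apply/seteqP; split => // z [[p Sp pz] [q Sq qz]].
wlog le_rho : p q S S' far Sp Sq pz qz / rho q <= rho p.
  move=> wlog_le; have [le|/ltW le] := leP (rho q) (rho p).
    exact: (wlog_le p q S S').
  by apply: (wlog_le q p S' S) => // q' p' Sq' Sp'; rewrite and_comm; exact: far.
have zq : ball z (rho p / 2) q.
  by apply: le_ball (ball_sym qz); rewrite ler_pM2r.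
by have [] := far p q Sp Sq; have := ball_triangle pz zq; rewrite -splitr.
Qed.

Lemma notin_closure_ball (A : set T) p : ~ closure A p ->
  exists2 r, 0 < r & forall q, A q -> ~ ball p r q.
Proof.
move=> /existsNP[N] /not_implyP[/nbhs_ballP[r r0 rN] AN0].
by exists r => // q Aq pq; apply: AN0; exists q; split => //; exact: rN.
Qed.

Lemma separated_open_nbhs (A A' : set T) : separated A A' ->
  exists U V : set T, [/\ open U, open V, U `&` V = set0, A `<=` U & A' `<=` V].
Proof.
move=> sepAA'; have [cAA' AcA'] := sepAA'.
have AA'0 p : A p -> A' p -> False.
  by move=> Ap A'p; suff : (A `&` A') p by rewrite separated_disjoint.
have /choice[rho rhoP] : forall p, exists r, 0 < r /\ forall q,
    (A p -> A' q -> ~ ball p r q) /\ (A' p -> A q -> ~ ball p r q).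
  move=> p; have [Ap|nAp] := pselect (A p).
    have [cp|r r0 far] := @notin_closure_ball A' p.
      by suff : (A `&` closure A') p by rewrite AcA'.
    by exists r; split=> // q; split=> [_ /far //|/(AA'0 p Ap)].
  have [A'p|nA'p] := pselect (A' p); last first.
    by exists 1; split=> // q; split=> [/nAp|/nA'p].
  have [cp|r r0 far] := @notin_closure_ball A p.
    by suff : (closure A `&` A') p by rewrite cAA'.
  by exists r; split=> // q; split=> [/nAp|_ /far].
have rho_gt0 p : 0 < rho p / 2 by rewrite divr_gt0 // (rhoP p).1.
exists (half_balls rho A), (half_balls rho A'); split.
- exact: open_half_balls.
- exact: open_half_balls.
- apply: half_balls_disjoint => p q Ap A'q.
  by split; [exact: ((rhoP p).2 q).1 | exact: ((rhoP q).2 p).2].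
- by move=> p Ap; exists p => //; exact: ballxx.
- by move=> p A'p; exists p => //; exact: ballxx.
Qed.

End separated_open_nbhs.

Lemma connected_cover_setI_neq0 {T : topologicalType} (P Q : set T) :
  connected [set: T] -> open P -> open Q -> P `|` Q = setT ->
  P !=set0 -> Q !=set0 -> P `&` Q !=set0.
Proof.
move=> cT oP oQ PQT P0 [q Qq]; apply: contrapT => /nonemptyPn PQ0.
have PTQ : P = setT `&` ~` Q.
  rewrite setTI; apply/seteqP; split=> [x Px Qx|x nQx].
    by suff : (P `&` Q) x by rewrite PQ0.
  have : (P `|` Q) x by rewrite PQT.
  by case.
have PT : P = setT.
  apply: cT => //; first by exists P; rewrite ?setTI.
  by exists (~` Q) => //; exact: open_closedC.
suff : (P `&` Q) q by rewrite PQ0.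
by rewrite PT.
Qed.

Lemma fst_setI_sub_fst_setC {T1 T2 : topologicalType} (U V : set (T1 * T2)) :
  connected [set: T2] -> open U -> open V -> U `&` V = set0 ->
  fst @` U `&` fst @` V `<=` fst @` ~` (U `|` V).
Proof.
move=> cT2 oU oV UV0 _ [[[x s] Us /= <-] [[x' s'] Vs' /= x'x]].
rewrite {x'}x'x in Vs'; apply: contrapT => nK.
pose line y : T1 * T2 := (x, y).
have line_cont : continuous line.
  by move=> y; apply: cvg_pair; [exact: cvg_cst | exact: cvg_id].
have cover : line @^-1` U `|` line @^-1` V = setT.
  apply/seteqP; split=> // y _; apply: contrapT => /not_orP[nU nV].
  by apply: nK; exists (x, y) => //; case.
have [y [Uy Vy]] : line @^-1` U `&` line @^-1` V !=set0.
  apply: (connected_cover_setI_neq0 _ _ cT2) => //.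
  - by apply: open_comp => // y _; exact: line_cont.
  - by apply: open_comp => // y _; exact: line_cont.
  - by exists s.
  - by exists s'.
by suff : (U `&` V) (x, y) by rewrite UV0.
Qed.

Theorem lemma2 (R : realType) (F : R -> R) :
  (forall A : set (R * R), closed A ->
     (exists a b : R, a < b /\ `]a, b[%classic `<=` proj1 @` A) ->
     A `&` graph_of F !=set0) ->
  connected (graph_of F).
Proof.
move=> meets; apply: contrapT => /connectedPn[E [E0 GE sepE]].
have [U [V [oU oV UV0 EU EV]]] := separated_open_nbhs _ _ sepE.
have GUV : graph_of F `<=` U `|` V by rewrite GE => p [/EU|/EV]; [left|right].
have connR : connected [set: R] by apply/connected_intervalP => x y _ _ z _.
have [c UVc] : fst @` U `&` fst @` V !=set0.
  apply: (connected_cover_setI_neq0 _ _ connR); try exact: fst_open.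
  - apply/seteqP; split=> // x _.
    by have [Ux|Vx] := GUV (x, F x) erefl; [left|right]; exists (x, F x).
  - by have [p /EU Up] := E0 false; exists p.1, p.
  - by have [p /EV Vp] := E0 true; exists p.1, p.
have /nbhs_ballP[r r0] : nbhs c (fst @` U `&` fst @` V).
  by apply: open_nbhs_nbhs; split=> //; apply: openI; exact: fst_open.
rewrite ball_itv => itvUV.
have [p [Kp Gp]] : ~` (U `|` V) `&` graph_of F !=set0.
  apply: meets; first exact/open_closedC/openU.
  exists (c - r), (c + r); split; first by rewrite ltrBDr -addrA ltrDl addr_gt0.
  by move=> x /itvUV /(fst_setI_sub_fst_setC _ _ connR oU oV UV0).
exact: Kp (GUV p Gp).
Qed.
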